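(* Let $\mathcal{X}=\{1,\dots,n\}$, let $\pi$ be a strictly positive probability distribution on $\mathcal{X}$, let $P$ be a $\pi$-reversible transition matrix, let $G$ be the Gibbs kernel induced by a partition $\mathcal{X}=\bigsqcup_{i=1}^k\mathcal{O}_i$, and let $A=\frac12(P+G)$. Then $$\|A-\Pi\|_{F,\pi}^2=\tfrac14\operatorname{Tr}(P^2)+\tfrac12\operatorname{Tr}(\overline{P})+\tfrac{k}{4}-1.$$
   Context: $\pi$-reversible means $\pi(x)P(x,y)=\pi(y)P(y,x)$ for all $x,y$. The Gibbs kernel is $G(x,y)=\pi(y)/\pi(\mathcal{O}(x))$ if $y\in\mathcal{O}(x)$ and $0$ otherwise, where $\mathcal{O}(x)$ is the block containing $x$ and $\pi(\mathcal{O})=\sum_{z\in\mathcal{O}}\pi(z)$. $\overline{P}(i,j)=\frac{1}{\pi(\mathcal{O}_i)}\sum_{x\in\mathcal{O}_i,\,y\in\mathcal{O}_j}\pi(x)P(x,y)$ is the projection chain. $\Pi$ is the matrix with every row equal to $\pi$. $\|M\|_{F,\pi}^2=\operatorname{Tr}(M^*M)$ with $M^*(x,y)=\pi(y)M(y,x)/\pi(x)$. *)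

From mathcomp Require Import all_boot all_order all_algebra.
Set Implicit Arguments. Unset Strict Implicit. Unset Printing Implicit Defensive.
Import Order.TTheory GRing.Theory Num.Theory.
Local Open Scope ring_scope.

(* State space X = 'I_n; pi : 'I_n -> R; partition given by block map blk : 'I_n -> 'I_k,
   block O_i = {x | blk x = i}. *)

Definition piO (R : realFieldType) (n k : nat) (pi : 'I_n -> R) (blk : 'I_n -> 'I_k)
  (i : 'I_k) : R := \sum_(z : 'I_n | blk z == i) pi z.

Definition gibbs (R : realFieldType) (n k : nat) (pi : 'I_n -> R) (blk : 'I_n -> 'I_k)
  : 'M[R]_n :=
  \matrix_(x, y) (if blk y == blk x then pi y / piO pi blk (blk x) else 0).

Definition proj_chain (R : realFieldType) (n k : nat) (pi : 'I_n -> R) (P : 'M[R]_n)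
  (blk : 'I_n -> 'I_k) : 'M[R]_k :=
  \matrix_(i, j) ((piO pi blk i)^-1 *
     \sum_(x : 'I_n | blk x == i) \sum_(y : 'I_n | blk y == j) pi x * P x y).

Definition Pimx (R : realFieldType) (n : nat) (pi : 'I_n -> R) : 'M[R]_n :=
  \matrix_(x, y) pi y.

Definition pi_adj (R : realFieldType) (n : nat) (pi : 'I_n -> R) (M : 'M[R]_n) : 'M[R]_n :=
  \matrix_(x, y) (pi y * M y x / pi x).

Definition frob2 (R : realFieldType) (n : nat) (pi : 'I_n -> R) (M : 'M[R]_n) : R :=
  \tr (pi_adj pi M *m M).

From mathcomp Require Import all_boot all_order all_algebra.
From mathcomp Require Import ring.
Set Implicit Arguments. Unset Strict Implicit. Unset Printing Implicit Defensive.
Import Order.TTheory GRing.Theory Num.Theory.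
Local Open Scope ring_scope.

(* The squared norm is the diagonal of the bilinear form
   <M, N> = Tr(M^* N) = sum_(x,y) pi(x) M(x,y) N(x,y) / pi(y), so expanding
   ||(P + G)/2 - Pi||^2 only needs the six pairings of P, G and Pi.
   Reversibility turns <P, P> into Tr(P^2); pairing with G averages over
   blocks, which gives <M, G> = Tr(Mbar) and, since Gbar is the identity,
   <G, G> = k; pairing a stochastic matrix with Pi gives the total mass 1. *)

Section FrobeniusForm.

Variables (R : realFieldType) (n : nat) (pi : 'I_n -> R).

Definition frob_dot (M N : 'M[R]_n) : R := \tr (pi_adj pi M *m N).

Lemma frob2_dot M : frob2 pi M = frob_dot M M.
Proof. by []. Qed.

Lemma frob_dotE M N : frob_dot M N = \sum_x \sum_y pi y * M y x * N y x / pi x.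
Proof.
apply: eq_bigr => x _; rewrite mxE; apply: eq_bigr => y _.
by rewrite mxE mulrAC.
Qed.

Lemma frob_dotC M N : frob_dot M N = frob_dot N M.
Proof.
rewrite !frob_dotE; apply: eq_bigr => x _; apply: eq_bigr => y _.
by rewrite (mulrAC (pi y)).
Qed.

Lemma frob_dotDr M N1 N2 : frob_dot M (N1 + N2) = frob_dot M N1 + frob_dot M N2.
Proof. by rewrite /frob_dot mulmxDr mxtraceD. Qed.

Lemma frob_dotBr M N1 N2 : frob_dot M (N1 - N2) = frob_dot M N1 - frob_dot M N2.
Proof. by rewrite /frob_dot mulmxBr linearB. Qed.

Lemma frob_dotZr a M N : frob_dot M (a *: N) = a * frob_dot M N.
Proof. by rewrite /frob_dot -scalemxAr mxtraceZ. Qed.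

Lemma frob_dotDl M1 M2 N : frob_dot (M1 + M2) N = frob_dot M1 N + frob_dot M2 N.
Proof. by rewrite !(frob_dotC _ N) frob_dotDr. Qed.

Lemma frob_dotBl M1 M2 N : frob_dot (M1 - M2) N = frob_dot M1 N - frob_dot M2 N.
Proof. by rewrite !(frob_dotC _ N) frob_dotBr. Qed.

Lemma frob_dotZl a M N : frob_dot (a *: M) N = a * frob_dot M N.
Proof. by rewrite !(frob_dotC _ N) frob_dotZr. Qed.

Hypothesis pi_neq0 : forall x, pi x != 0.

Lemma frob_dot_reversible (P Q : 'M[R]_n) :
  (forall x y, pi x * P x y = pi y * P y x) -> frob_dot P Q = \tr (P *m Q).
Proof.
move=> Prev; rewrite frob_dotE; apply: eq_bigr => x _; rewrite mxE.
apply: eq_bigr => y _; rewrite -Prev mulrAC [pi x * _]mulrC mulfK //.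
Qed.

Lemma frob_dot_Pimx (M : 'M[R]_n) :
  (forall x, \sum_y M x y = 1) -> frob_dot M (Pimx pi) = \sum_x pi x.
Proof.
move=> Mrow; rewrite frob_dotE exchange_big /=; apply: eq_bigr => y _.
under eq_bigr => x _ do rewrite mxE mulfK //.
by rewrite -mulr_sumr Mrow mulr1.
Qed.

End FrobeniusForm.

Section GibbsKernel.

Variables (R : realFieldType) (n k : nat) (pi : 'I_n -> R) (blk : 'I_n -> 'I_k).
Hypothesis pi_gt0 : forall x, 0 < pi x.

Let G := gibbs pi blk.

Lemma piO_blk_gt0 x : 0 < piO pi blk (blk x).
Proof.
apply: (lt_le_trans (pi_gt0 x)); rewrite /piO (bigD1 x) //= lerDl.
by apply: sumr_ge0 => z _; apply: ltW.
Qed.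

Lemma gibbs_block_sum x j : \sum_(y | blk y == j) G x y = (blk x == j)%:R.
Proof.
under eq_bigr => y _ do rewrite mxE.
have [<- | neq_xj] := eqVneq (blk x) j.
  rewrite -big_mkcondr -mulr_suml (eq_bigl _ _ (fun y => andbb _)) /=.
  by apply: divff; rewrite gt_eqF // piO_blk_gt0.
by rewrite big1 // => y /eqP ->; rewrite eq_sym (negPf neq_xj).
Qed.

Lemma gibbs_row_sum x : \sum_y G x y = 1.
Proof.
rewrite (partition_big blk xpredT) //=.
under eq_bigr => j _ do rewrite gibbs_block_sum.
by rewrite (bigD1 (blk x)) //= eqxx big1 ?addr0 // => j; rewrite eq_sym => /negPf ->.
Qed.

Lemma frob_dot_gibbs (M : 'M[R]_n) : frob_dot pi M G = \tr (proj_chain pi M blk).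
Proof.
rewrite frob_dotE exchange_big (partition_big blk xpredT) //=.
apply: eq_bigr => i _; rewrite mxE mulr_sumr; apply: eq_bigr => y /eqP blk_y.
rewrite [in RHS]big_mkcond mulr_sumr; apply: eq_bigr => x _.
rewrite mxE blk_y; case: ifP => _; last by rewrite !mulr0 mul0r.
by field; rewrite -blk_y !gt_eqF ?piO_blk_gt0.
Qed.

Hypothesis blk_surj : forall i : 'I_k, exists x, blk x = i.

Lemma proj_chain_gibbs : proj_chain pi G blk = 1%:M.
Proof.
apply/matrixP => i j; rewrite !mxE.
under eq_bigr => x blk_x do rewrite -mulr_sumr gibbs_block_sum (eqP blk_x).
rewrite -mulr_suml; have [_|_] := eqVneq i j; last by rewrite !mulr0.
have [x <-] := blk_surj i; rewrite mulr1.
by apply: mulVf; rewrite gt_eqF // piO_blk_gt0.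
Qed.

Lemma frob2_gibbs : frob2 pi G = k%:R.
Proof. by rewrite frob2_dot frob_dot_gibbs proj_chain_gibbs mxtrace1. Qed.

End GibbsKernel.

Theorem corollary4p3 (R : realFieldType) (n k : nat) (pi : 'I_n -> R) (P : 'M[R]_n)
  (blk : 'I_n -> 'I_k) :
  (forall x, 0 < pi x) ->
  \sum_(x : 'I_n) pi x = 1 ->
  (forall x y, 0 <= P x y) ->
  (forall x, \sum_(y : 'I_n) P x y = 1) ->
  (forall x y, pi x * P x y = pi y * P y x) ->
  (forall i : 'I_k, exists x : 'I_n, blk x = i) ->
  frob2 pi ((2%:R)^-1 *: (P + gibbs pi blk) - Pimx pi)
  = (4%:R)^-1 * \tr (P *m P) + (2%:R)^-1 * \tr (proj_chain pi P blk)
    + k%:R / 4%:R - 1.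
Proof.
move=> pi_gt0 pi_sum1 _ P_row P_rev blk_surj.
have pi_neq0 x : pi x != 0 by rewrite gt_eqF.
set G := gibbs pi blk; set Pi := Pimx pi.
have Pi_row x : \sum_y Pi x y = 1.
  by rewrite -pi_sum1; apply: eq_bigr => y _; rewrite mxE.
have PP := frob_dot_reversible pi_neq0 P P_rev.
have PG : frob_dot pi P G = \tr (proj_chain pi P blk) by exact: frob_dot_gibbs.
have GG : frob_dot pi G G = k%:R := frob2_gibbs pi_gt0 blk_surj.
have PPi := frob_dot_Pimx pi_neq0 P_row.
have GPi := frob_dot_Pimx pi_neq0 (gibbs_row_sum blk pi_gt0).
have PiPi := frob_dot_Pimx pi_neq0 Pi_row.
rewrite frob2_dot !(frob_dotBl, frob_dotBr, frob_dotZl, frob_dotZr, frob_dotDl, frob_dotDr).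
rewrite (frob_dotC _ G P) (frob_dotC _ Pi P) (frob_dotC _ Pi G).
rewrite PP PG GG PPi GPi PiPi pi_sum1.
by field.
Qed.
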